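(* Let $U=(U_{ij})_{i,j=1}^M$, $U_{ij}\in M_M(\mathbb C)$, and $V=(V_{ab})_{a,b=1}^N$, $V_{ab}\in M_N(\mathbb C)$, be projective models, $Q\in M_{M\times N}(\mathbb T)$, $W=U\otimes_QV$ and $W^\circ=U\,{}_Q\!\otimes V$. Then $$\widetilde{W}=\widetilde{U}_{13}\,Q^\delta\,\widetilde{V}_{24},\qquad \widetilde{W^\circ}=\widetilde{V}_{24}\,Q^\delta\,\widetilde{U}_{13},$$ where $Q^\delta=\mathrm{diag}\left(\frac{Q_{ic}Q_{jd}}{Q_{id}Q_{jc}}\right)_{icjd}$ is the diagonal matrix on $\mathbb C^M\otimes\mathbb C^N\otimes\mathbb C^M\otimes\mathbb C^N$ whose entry at the basis vector indexed by $(i,c,j,d)$ is $\frac{Q_{ic}Q_{jd}}{Q_{id}Q_{jc}}$.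
   Context: A square matrix of operators is magic if its entries are orthogonal projections and rows and columns sum to $1$; for $U=(U_{ij})$ with $U_{ij}\in M_n(\mathbb C)$, $(U'_{kl})_{ij}=(U_{ij})_{kl}$, and $U$ is a projective model if $U,U'$ are magic. $(W_{ia,jb})_{kc,ld}=\frac{Q_{ic}Q_{jd}}{Q_{id}Q_{jc}}(U_{ij})_{kl}(V_{ab})_{cd}$ and $(W^\circ_{ia,jb})_{kc,ld}=\frac{Q_{ka}Q_{lb}}{Q_{kb}Q_{la}}(U_{ij})_{kl}(V_{ab})_{cd}$. For such a matrix $U$, $\widetilde U$ is defined by $(\widetilde U_{ij})_{kl}=(U_{jl})_{ik}$, viewed as the element $\sum_{ijkl}(\widetilde U_{ij})_{kl}\,e_{ij}\otimes e_{kl}$ of $M_n(\mathbb C)\otimes M_n(\mathbb C)$. The matrices $\widetilde W,\widetilde{W^\circ}$ (built with $n=MN$) are viewed in $M_M\otimes M_N\otimes M_M\otimes M_N$ via $e_{ia,jb}\otimes e_{kc,ld}=e_{ij}\otimes e_{ab}\otimes e_{kl}\otimes e_{cd}$; $\widetilde U_{13}$ and $\widetilde V_{24}$ are the leg-numbered elements acting on tensor legs $1,3$ and $2,4$ respectively. *)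

From HB Require Import structures.
From mathcomp Require Import all_boot all_order all_algebra.
From mathcomp Require Import complex.
From mathcomp Require Import Rstruct.
Set Implicit Arguments. Unset Strict Implicit. Unset Printing Implicit Defensive.
Import Order.TTheory GRing.Theory Num.Theory.
Local Open Scope ring_scope.

Definition C : numClosedFieldType := (Rdefinitions.R)[i].

Definition adj n (A : 'M[C]_n) : 'M[C]_n := \matrix_(i, j) (A j i)^*.

Definition is_orth_proj n (P : 'M[C]_n) : Prop := P *m P = P /\ adj P = P.

Definition magic m n (X : 'I_m -> 'I_m -> 'M[C]_n) : Prop :=
  [/\ forall i j, is_orth_proj (X i j),
      forall i, \sum_(j < m) X i j = 1%:M &
      forall j, \sum_(i < m) X i j = 1%:M].

Definition prime_mx n (U : 'I_n -> 'I_n -> 'M[C]_n) : 'I_n -> 'I_n -> 'M[C]_n :=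
  fun k l => \matrix_(i, j) U i j k l.

Definition projective_model n (U : 'I_n -> 'I_n -> 'M[C]_n) : Prop :=
  magic U /\ magic (prime_mx U).

(* A "block family" over index type I: X i j k l = (X_{ij})_{kl}. *)
Definition bfam (I : finType) := I -> I -> I -> I -> C.

Definition bfam_of n (U : 'I_n -> 'I_n -> 'M[C]_n) : bfam 'I_n :=
  fun i j k l => U i j k l.

Definition tilde (I : finType) (X : bfam I) : bfam I :=
  fun i j k l => X j l i k.

Definition tensQ M N (U : 'I_M -> 'I_M -> 'M[C]_M) (V : 'I_N -> 'I_N -> 'M[C]_N)
  (Q : 'M[C]_(M, N)) : bfam ('I_M * 'I_N)%type :=
  fun ia jb kc ld =>
    let: (i, a) := ia in let: (j, b) := jb in
    let: (k, c) := kc in let: (l, d) := ld in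
    (Q i c * Q j d) / (Q i d * Q j c) * U i j k l * V a b c d.

Definition Qtens M N (U : 'I_M -> 'I_M -> 'M[C]_M) (V : 'I_N -> 'I_N -> 'M[C]_N)
  (Q : 'M[C]_(M, N)) : bfam ('I_M * 'I_N)%type :=
  fun ia jb kc ld =>
    let: (i, a) := ia in let: (j, b) := jb in
    let: (k, c) := kc in let: (l, d) := ld in
    (Q k a * Q l b) / (Q k b * Q l a) * U i j k l * V a b c d.

(* The algebra M_M (x) M_N (x) M_M (x) M_N, realised as matrices (functions of
   a row and a column index) indexed by the basis of C^M (x) C^N (x) C^M (x) C^N.
   The matrix unit e_{x y} has row x and column y. *)
Definition leg4 M N := ('I_M * 'I_N * 'I_M * 'I_N)%type.
Definition mx4 M N := leg4 M N -> leg4 M N -> C.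

Definition mul4 M N (A B : mx4 M N) : mx4 M N :=
  fun x y => \sum_(z : leg4 M N) A x z * B z y.

(* X in M_{MN} (x) M_{MN} viewed in M_M (x) M_N (x) M_M (x) M_N via
   e_{ia,jb} (x) e_{kc,ld} = e_ij (x) e_ab (x) e_kl (x) e_cd *)
Definition view4 M N (X : bfam ('I_M * 'I_N)%type) : mx4 M N :=
  fun x y =>
    let: (i, a, k, c) := x in let: (j, b, l, d) := y in
    X (i, a) (j, b) (k, c) (l, d).

(* leg numbering: X = sum X i j k l e_ij (x) e_kl ; X_13 = sum ... e_ij (x) 1 (x) e_kl (x) 1 *)
Definition leg13 M N (X : bfam 'I_M) : mx4 M N :=
  fun x y =>
    let: (i, a, k, c) := x in let: (j, b, l, d) := y in
    X i j k l * (a == b)%:R * (c == d)%:R.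

Definition leg24 M N (X : bfam 'I_N) : mx4 M N :=
  fun x y =>
    let: (i, a, k, c) := x in let: (j, b, l, d) := y in
    X a b c d * (i == j)%:R * (k == l)%:R.

Definition Qdelta M N (Q : 'M[C]_(M, N)) : mx4 M N :=
  fun x y =>
    let: (i, c, j, d) := x in
    (x == y)%:R * ((Q i c * Q j d) / (Q i d * Q j c)).

(* Both sides are 4-leg operators, and the right-hand sides are products
   "leg13 * diagonal * leg24" (resp. "leg24 * diagonal * leg13").  In such a
   product the first factor fixes legs 1,3 of the intermediate index to those of
   the column and legs 2,4 to those of the row (or conversely), so the sum over
   the intermediate index collapses to a single term; comparing that term with
   the definition of the twisted tensor products is then a ring identity. *)
From HB Require Import structures.
From mathcomp Require Import all_boot all_order all_algebra.
From mathcomp Require Import complex.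
From mathcomp Require Import Rstruct.
From mathcomp Require Import ring.
From Stdlib Require Import FunctionalExtensionality.
Import Order.TTheory GRing.Theory Num.Theory.
Local Open Scope ring_scope.

Section Mx4.
Variables M N : nat.
Implicit Types (A D : mx4 M N).

Definition diagonal4 D := forall x y, x != y -> D x y = 0.

Lemma Qdelta_diagonal (Q : 'M[C]_(M, N)) : diagonal4 (Qdelta Q).
Proof. by case=> [[[i c] j] d] y /negbTE xy; rewrite /Qdelta xy mul0r. Qed.

Lemma Qdelta_diag (Q : 'M[C]_(M, N)) i c j d :
  Qdelta Q (i, c, j, d) (i, c, j, d) = Q i c * Q j d / (Q i d * Q j c).
Proof. by rewrite /Qdelta eqxx mul1r. Qed.

Lemma mul4_diagr A D x y : diagonal4 D -> mul4 A D x y = A x y * D y y.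
Proof.
move=> diagD; rewrite /mul4 (bigD1 y) //= big1 ?addr0 // => z /negbTE zy.
by rewrite diagD ?zy // mulr0.
Qed.

Lemma mul4_leg13_diag_leg24 (X : bfam 'I_M) (Y : bfam 'I_N) D
    (i j : 'I_M) (a b : 'I_N) (k l : 'I_M) (c d : 'I_N) :
  diagonal4 D ->
  mul4 (mul4 (@leg13 M N X) D) (@leg24 M N Y) (i, a, k, c) (j, b, l, d) =
    D (j, a, l, c) (j, a, l, c) * X i j k l * Y a b c d.
Proof.
move=> diagD; rewrite /mul4.
under eq_bigr do rewrite -/(mul4 _ _ _ _) mul4_diagr //.
rewrite (bigD1 (j, a, l, c)) //= !eqxx big1 ?addr0 ?mulr1; first by ring.
case=> [[[j' b'] l'] d'] /=.
have [<-|] := eqVneq a b'; last by rewrite !(mulr0, mul0r).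
have [<-|] := eqVneq c d'; last by rewrite !(mulr0, mul0r).
have [ej|] := eqVneq j' j; last by rewrite !(mulr0, mul0r).
have [el|] := eqVneq l' l; last by rewrite !(mulr0, mul0r).
by rewrite ej el => /eqP.
Qed.

Lemma mul4_leg24_diag_leg13 (X : bfam 'I_M) (Y : bfam 'I_N) D
    (i j : 'I_M) (a b : 'I_N) (k l : 'I_M) (c d : 'I_N) :
  diagonal4 D ->
  mul4 (mul4 (@leg24 M N Y) D) (@leg13 M N X) (i, a, k, c) (j, b, l, d) =
    D (i, b, k, d) (i, b, k, d) * X i j k l * Y a b c d.
Proof.
move=> diagD; rewrite /mul4.
under eq_bigr do rewrite -/(mul4 _ _ _ _) mul4_diagr //.
rewrite (bigD1 (i, b, k, d)) //= !eqxx big1 ?addr0 ?mulr1; first by ring.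
case=> [[[i' b'] k'] d'] /=.
have [<-|] := eqVneq i i'; last by rewrite !(mulr0, mul0r).
have [<-|] := eqVneq k k'; last by rewrite !(mulr0, mul0r).
have [eb|] := eqVneq b' b; last by rewrite !(mulr0, mul0r).
have [ed|] := eqVneq d' d; last by rewrite !(mulr0, mul0r).
by rewrite eb ed => /eqP.
Qed.

End Mx4.

Theorem proposition2p6 (M N : nat)
  (U : 'I_M -> 'I_M -> 'M[C]_M) (V : 'I_N -> 'I_N -> 'M[C]_N)
  (Q : 'M[C]_(M, N)) :
  projective_model U -> projective_model V ->
  (forall i a, `|Q i a| = 1) ->
  view4 (tilde (tensQ U V Q)) =
    mul4 (mul4 (@leg13 M N (tilde (bfam_of U))) (Qdelta Q))
         (@leg24 M N (tilde (bfam_of V)))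
  /\
  view4 (tilde (Qtens U V Q)) =
    mul4 (mul4 (@leg24 M N (tilde (bfam_of V))) (Qdelta Q))
         (@leg13 M N (tilde (bfam_of U))).
Proof.
move=> _ _ _; split; do 2 apply: functional_extensionality => -[[[? ?] ?] ?].
- rewrite mul4_leg13_diag_leg24; last exact: Qdelta_diagonal.
  by rewrite Qdelta_diag /tilde /bfam_of /=; ring.
- rewrite mul4_leg24_diag_leg13; last exact: Qdelta_diagonal.
  by rewrite Qdelta_diag /tilde /bfam_of /=; ring.
Qed.
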